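(* Let $T\ge1$ and $\varepsilon>0$, and consider the MDP with states $\{1,2,3,4\}$ defined as follows. State 1 has two actions: one gives reward $\frac12$ and moves deterministically to state 2; the other gives reward $0$ and moves deterministically to state 3. State 2 has a single action giving reward $\frac12$ and moving deterministically to state 1. State 3 has a single action giving reward $\frac12$ and moving to state 3 with probability $1-\frac1T$ and to state 4 with probability $\frac1T$. State 4 has two actions: one gives reward $\frac12+\varepsilon$ and moves to state 4 with probability $1-\frac1T$ and to state 3 with probability $\frac1T$; the other gives reward $0$ and moves deterministically to state 2. Then $\|h^\star\|_{\mathrm{sp}}=\frac{\varepsilon T}2+\varepsilon+\frac12$, but there exists a policy $\pi$ with constant gain such that $\rho^\pi=\rho^\star-\frac\varepsilon2\mathbf 1$ and $\|h^\pi\|_{\mathrm{sp}}=\frac12$.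
   Context: Policies are stationary Markovian. Gain $\rho^\pi(s)=\lim_T\frac1T\mathbb{E}^\pi_s[\sum_{t<T}r(S_t,A_t)]$, $\rho^\star=\sup_\pi\rho^\pi$; bias $h^\pi(s)=\mathrm{C}\text{-}\lim_T\mathbb{E}^\pi_s[\sum_{t<T}(r(S_t,A_t)-\rho^\pi(S_t))]$; $h^\star$ is the bias of a Blackwell-optimal policy. $\|x\|_{\mathrm{sp}}=\max x-\min x$; $\mathbf 1$ is the all-ones vector. *)

From mathcomp Require Import all_boot all_order all_algebra.
From mathcomp Require Import all_classical all_reals all_analysis.
Set Implicit Arguments. Unset Strict Implicit. Unset Printing Implicit Defensive.
Import Order.TTheory GRing.Theory Num.Theory numFieldNormedType.Exports.
Local Open Scope ring_scope.
Local Open Scope classical_set_scope.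

Record mdp (R : realType) (n : nat) := MDP {
  nact : 'I_n -> nat;
  rew : forall s : 'I_n, 'I_(nact s) -> R;
  trans : forall s : 'I_n, 'I_(nact s) -> 'I_n -> R }.

Section MDPDefs.
Context {R : realType} {n : nat} (M : mdp R n).

Definition policy := forall s : 'I_n, 'I_(nact M s) -> R.
Definition is_policy (pi : policy) : Prop :=
  forall s, (forall a, 0 <= pi s a) /\ \sum_a pi s a = 1.

Definition Ppi (pi : policy) : 'M[R]_n :=
  \matrix_(s, s') \sum_a pi s a * @trans R n M s a s'.
Definition rpi (pi : policy) : 'cV[R]_n :=
  \col_s \sum_a pi s a * @rew R n M s a.

(* E^pi_s[ v(S_t) ] = (P_pi^t v)(s) *)
Definition expect_t (pi : policy) (t : nat) (v : 'cV[R]_n) (s : 'I_n) : R :=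
  (iter t (mulmx (Ppi pi)) v) s ord0.

Definition gain (pi : policy) (s : 'I_n) : R :=
  limn (fun T : nat => T%:R^-1 * \sum_(t < T) expect_t pi t (rpi pi) s).

(* bias h^pi(s) = C-lim_T E^pi_s[sum_{t<T} (r(S_t,A_t) - rho^pi(S_t))] *)
Definition bias_partial (pi : policy) (s : 'I_n) (T : nat) : R :=
  \sum_(t < T) (expect_t pi t (rpi pi) s - expect_t pi t (\col_i gain pi i) s).
Definition bias (pi : policy) (s : 'I_n) : R :=
  limn (fun N : nat => N%:R^-1 * \sum_(T < N) bias_partial pi s T.+1).

Definition opt_gain (s : 'I_n) : R :=
  sup [set x | exists pi, is_policy pi /\ x = gain pi s].

Definition disc_value (g : R) (pi : policy) (s : 'I_n) : R :=
  limn (fun N : nat => \sum_(t < N) g ^+ t * expect_t pi t (rpi pi) s).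
Definition blackwell_optimal (pi : policy) : Prop :=
  is_policy pi /\
  exists g0 : R, 0 <= g0 < 1 /\
    forall g : R, g0 < g < 1 ->
      forall pi', is_policy pi' -> forall s, disc_value g pi' s <= disc_value g pi s.
End MDPDefs.
Arguments policy {R n} M.
Arguments is_policy {R n} M pi.
Arguments Ppi {R n} M pi.
Arguments rpi {R n} M pi.
Arguments expect_t {R n} M pi t v s.
Arguments gain {R n} M pi s.
Arguments bias_partial {R n} M pi s T.
Arguments bias {R n} M pi s.
Arguments opt_gain {R n} M s.
Arguments disc_value {R n} M g pi s.
Arguments blackwell_optimal {R n} M pi.

Definition sp_norm {R : realType} {n : nat} (x : 'I_n.+1 -> R) : R :=
  \big[Num.max/x ord0]_i x i - \big[Num.min/x ord0]_i x i.

(* The example MDP.  State k (1..4) of the paper is the ordinal k-1. *)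
Definition ex_nact (s : 'I_4) : nat := if (val s == 0)%N || (val s == 3)%N then 2 else 1.

Definition ex_rew_nat {R : realType} (eps : R) (s a : nat) : R :=
  match s, a with
  | 0, 0 => 1/2          (* state 1, action "to 2" *)
  | 0, _ => 0            (* state 1, action "to 3" *)
  | 1, _ => 1/2
  | 2, _ => 1/2
  | 3, 0 => 1/2 + eps    (* state 4, action "stay" *)
  | _, _ => 0            (* state 4, action "to 2" *)
  end.

Definition ex_trans_nat {R : realType} (T : R) (s a s' : nat) : R :=
  match s, a, s' with
  | 0, 0, 1 => 1
  | 0, 1, 2 => 1
  | 1, _, 0 => 1
  | 2, _, 2 => 1 - 1/T
  | 2, _, 3 => 1/T
  | 3, 0, 3 => 1 - 1/T
  | 3, 0, 2 => 1/T
  | 3, 1, 1 => 1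
  | _, _, _ => 0
  end.

Definition ex_mdp {R : realType} (T eps : R) : mdp R 4 :=
  @MDP R 4 ex_nact
    (fun s a => ex_rew_nat eps (val s) (val a))
    (fun s a s' => ex_trans_nat T (val s) (val a) (val s')).

From mathcomp Require Import all_boot all_order all_algebra.
From mathcomp Require Import all_classical all_reals all_analysis.
From mathcomp Require Import ring lra.
Import Order.TTheory GRing.Theory Num.Theory numFieldNormedType.Exports.
Set Implicit Arguments. Unset Strict Implicit. Unset Printing Implicit Defensive.
Local Open Scope ring_scope.
Local Open Scope classical_set_scope.

(* Both policies are evaluated through explicit solutions of the Poisson
   equation [r = rho 1 + h - P h]; the bias is the solution [h] of the form
   [w - P w], i.e. with zero stationary mean.  The policy that enters the chain
   {3, 4} and stays in 4 has gain 1/2 + eps/2, and its bias satisfies the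
   average optimality inequality, so no policy does better.  For discount
   factors close to 1 its discounted values satisfy the discounted optimality
   inequalities, strictly at the two actions it never uses: this makes it
   Blackwell optimal, and forces every Blackwell-optimal policy to coincide
   with it.  The policy cycling through {1, 2} (and leaving 4 for 2) loses
   eps/2 of gain, but its bias (0, 0, -1/2, -1/2) has span 1/2. *)

Section RowStochastic.
Variables (R : realType) (n : nat).
Implicit Types (P Q : 'M[R]_n) (u v h d : 'cV[R]_n) (c : R).

Definition row_stochastic P := (forall i j, 0 <= P i j) /\ (forall i, \sum_j P i j = 1).
Definition col_ge0 v := forall i, 0 <= v i ord0.
Definition col_bounded v B := forall i, `|v i ord0| <= B.

Lemma row_stochastic1 : row_stochastic 1%:M.
Proof.
split=> [i j | i]; first by rewrite mxE ler0n.
rewrite (bigD1 i) //= big1 => [|j /negbTE ji]; last by rewrite mxE eq_sym ji.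
by rewrite mxE eqxx addr0.
Qed.

Lemma row_stochasticM P Q : row_stochastic P -> row_stochastic Q -> row_stochastic (P *m Q).
Proof.
move=> [P0 P1] [Q0 Q1]; split=> [i j | i].
  by rewrite mxE; apply: sumr_ge0 => k _; apply: mulr_ge0.
under eq_bigr do rewrite mxE.
rewrite exchange_big /= -(P1 i); apply: eq_bigr => k _.
by rewrite -mulr_sumr Q1 mulr1.
Qed.

Lemma row_stochasticX P t : row_stochastic P -> row_stochastic (P ^+ t).
Proof.
move=> sP; elim: t => [|t IH]; first exact: row_stochastic1.
by rewrite exprS -mulmxE; apply: row_stochasticM.
Qed.

Lemma row_stochastic_mul_ge0 P v : row_stochastic P -> col_ge0 v -> col_ge0 (P *m v).
Proof.
by move=> [P0 _] v0 i; rewrite mxE; apply: sumr_ge0 => j _; apply: mulr_ge0.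
Qed.

Lemma row_stochastic_mul_bounded P v B :
  row_stochastic P -> col_bounded v B -> col_bounded (P *m v) B.
Proof.
move=> [P0 P1] vB i; rewrite mxE; apply: le_trans (ler_norm_sum _ _ _) _.
rewrite -[B]mul1r -(P1 i) mulr_suml; apply: ler_sum => j _.
by rewrite normrM ger0_norm // ler_wpM2l.
Qed.

Lemma row_stochastic_mul_const P c :
  row_stochastic P -> P *m (const_mx c : 'cV[R]_n) = const_mx c.
Proof.
move=> [_ P1]; apply/matrixP => i j; rewrite !mxE.
by under eq_bigr do rewrite mxE; rewrite -mulr_suml P1 mul1r.
Qed.

Lemma col_bounded_sum_norm v : col_bounded v (\sum_i `|v i ord0|).
Proof.
by move=> i; rewrite (bigD1 i) //= lerDl; apply: sumr_ge0 => j _.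
Qed.

Lemma col_boundedB u v B C :
  col_bounded u B -> col_bounded v C -> col_bounded (u - v) (B + C).
Proof.
by move=> uB vC i; rewrite !mxE (le_trans (ler_normB _ _)) ?lerD.
Qed.

Lemma iter_mulmx P t v : iter t (mulmx P) v = P ^+ t *m v.
Proof.
elim: t => [|t IH]; first by rewrite expr0 mul1mx.
by rewrite iterS IH exprS mulmxA.
Qed.

Lemma telescope_mulmx P v N :
  \sum_(t < N) P ^+ t *m (v - P *m v) = v - P ^+ N *m v.
Proof.
elim: N => [|N IH]; first by rewrite big_ord0 expr0 mul1mx subrr.
by rewrite big_ord_recr /= IH mulmxBr mulmxA exprSr -mulmxE addrA subrK.
Qed.

Lemma sum_exp_poisson P c h d N : row_stochastic P ->
  \sum_(t < N) P ^+ t *m (const_mx c + (h - P *m h) - d) =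
    const_mx c *+ N + (h - P ^+ N *m h) - \sum_(t < N) P ^+ t *m d.
Proof.
move=> sP; under eq_bigr => t _ do
  rewrite mulmxBr mulmxDr (row_stochastic_mul_const c (row_stochasticX t sP)).
by rewrite sumrB big_split /= sumr_const card_ord telescope_mulmx.
Qed.

End RowStochastic.

Lemma sum_discounted (R : realType) n (P : 'M[R]_n.+1) (g : R) (V d : 'cV_n.+1) N :
  \sum_(t < N) g ^+ t *: (P ^+ t *m (V - g *: (P *m V) - d)) =
    V - g ^+ N *: (P ^+ N *m V) - \sum_(t < N) g ^+ t *: (P ^+ t *m d).
Proof.
have gP t : g ^+ t *: (P ^+ t *m (V - g *: (P *m V))) =
    (g *: P) ^+ t *m (V - (g *: P) *m V) by rewrite exprZn !scalemxAl.
under eq_bigr do rewrite mulmxBr scalerBr gP.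
by rewrite sumrB telescope_mulmx exprZn scalemxAl.
Qed.

Section Limits.
Variable R : realType.
Implicit Types (u e : nat -> R) (l : R).

Lemma cvg_mul_invn (C : R) : (fun N : nat => C * N%:R^-1) @ \oo --> 0.
Proof.
by rewrite -(mulr0 C); apply: cvgMl_tmp; rewrite -cvg_shiftS; exact: cvg_harmonic.
Qed.

Lemma cvg_of_dist_le u e l : e @ \oo --> 0 ->
  (forall N, (0 < N)%N -> `|u N - l| <= e N) -> u @ \oo --> l.
Proof.
move=> e0 ue; apply/cvgrPdist_le => x x0.
move/cvgrPdist_le: e0 => /(_ x x0) e0; near=> N.
have N0 : (0 < N)%N by near: N; exact: nbhs_infty_gt.
rewrite distrC; apply: le_trans (ue N N0) _.
apply: le_trans (ler_norm _) _; rewrite -normrN -sub0r.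
by near: N; exact: e0.
Unshelve. all: end_near.
Qed.

Lemma limn_le_of u e l : cvgn u -> e @ \oo --> 0 ->
  (forall N, (0 < N)%N -> u N <= l + e N) -> limn u <= l.
Proof.
move=> cu e0 ue.
have le0 : (fun N => l + e N) @ \oo --> l.
  by rewrite -[X in _ --> X]addr0; apply: cvgD => //; exact: cvg_cst.
rewrite -(cvg_lim _ le0) //; apply: ler_lim => //; first by apply/cvg_ex; exists l.
by near=> N; apply: ue; near: N; exact: nbhs_infty_gt.
Unshelve. all: end_near.
Qed.

Lemma cesaro_dist_le (c x B : R) (N : nat) : (0 < N)%N -> `|x| <= B ->
  `|N%:R^-1 * (c *+ N + x) - c| <= B * N%:R^-1.
Proof.
move=> N0 xB; have N0' : (0 : R) < N%:R by rewrite ltr0n.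
rewrite -[c *+ N]mulr_natr mulrDr mulrCA mulVf ?gt_eqF // mulr1 addrAC subrr add0r.
by rewrite normrM gtr0_norm ?invr_gt0 // mulrC ler_wpM2r // invr_ge0 ltW.
Qed.

Lemma cesaro_le (c x y B : R) (N : nat) : (0 < N)%N -> x <= B -> 0 <= y ->
  N%:R^-1 * (c *+ N + x - y) <= c + B * N%:R^-1.
Proof.
move=> N0 xB y0; have N0' : (0 : R) < N%:R by rewrite ltr0n.
have Ni : 0 < (N%:R : R)^-1 by rewrite invr_gt0.
rewrite -[c *+ N]mulr_natr mulrBr mulrDr mulrCA mulVf ?gt_eqF // mulr1.
have : (N%:R : R)^-1 * x <= (N%:R)^-1 * B by rewrite ler_wpM2l // ltW.
have : 0 <= (N%:R : R)^-1 * y by rewrite mulr_ge0 // ltW.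
by rewrite [B * _]mulrC; lra.
Qed.

End Limits.

Section PolicyEvaluation.
Variables (R : realType) (n : nat) (M : mdp R n.+1) (pi : policy M).
Implicit Types (c g : R) (h w V d : 'cV[R]_n.+1).
Local Notation P := (Ppi M pi).
Local Notation r := (rpi M pi).
Hypothesis sP : row_stochastic P.

Lemma expect_tE t v s : expect_t M pi t v s = (P ^+ t *m v) s ord0.
Proof. by rewrite /expect_t iter_mulmx. Qed.

Lemma sum_discounted_expect_t g N v s :
  \sum_(t < N) g ^+ t * expect_t M pi t v s = (\sum_(t < N) g ^+ t *: (P ^+ t *m v)) s ord0.
Proof. by rewrite summxE; apply: eq_bigr => t _; rewrite mxE expect_tE. Qed.

Lemma gain_poisson c h : r = const_mx c + (h - P *m h) -> forall s, gain M pi s = c.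
Proof.
move=> r_eq s; apply: cvg_lim => //.
have hB := col_bounded_sum_norm h; set B := \sum_i _ in hB.
apply: (cvg_of_dist_le (cvg_mul_invn (B + B))) => N N0.
under eq_bigr do rewrite expect_tE.
have -> : r = const_mx c + (h - P *m h) - 0 by rewrite subr0.
rewrite -summxE sum_exp_poisson // big1 ?subr0 => [|t _]; last by rewrite mulmx0.
rewrite mxE mulmxnE mxE; apply: cesaro_dist_le => //.
by have := col_boundedB hB (row_stochastic_mul_bounded (row_stochasticX N sP) hB) s; rewrite mxE.
Qed.

(* [0 <= c] is needed because [limn] of a divergent sequence is [0]. *)
Lemma gain_le_poisson c h d : r = const_mx c + (h - P *m h) - d -> col_ge0 d -> 0 <= c ->
  forall s, gain M pi s <= c.
Proof.
move=> r_eq d0 c0 s; rewrite /gain; set u := fun T : nat => _.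
have [cu|/dvgP->//] := pselect (cvgn u).
have hB := col_bounded_sum_norm h; set B := \sum_i _ in hB.
apply: (limn_le_of cu (cvg_mul_invn (B + B))) => N N0.
rewrite /u; under eq_bigr do rewrite expect_tE.
rewrite -summxE r_eq sum_exp_poisson // !mxE mulmxnE mxE; apply: cesaro_le => //.
  have := col_boundedB hB (row_stochastic_mul_bounded (row_stochasticX N sP) hB) s.
  by rewrite !mxE; apply: le_trans; apply: ler_norm.
rewrite summxE; apply: sumr_ge0 => t _.
exact: row_stochastic_mul_ge0 (row_stochasticX t sP) d0 s.
Qed.

(* [h = w - P w] says that [h] has zero mean under every stationary law of
   [P], which singles the bias out among the solutions of the Poisson equation. *)
Lemma bias_poisson c h w : r = const_mx c + (h - P *m h) -> h = w - P *m w ->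
  forall s, bias M pi s = h s ord0.
Proof.
move=> r_eq h_eq s.
have gain_col : \col_i gain M pi i = const_mx c.
  by apply/matrixP => i j; rewrite !mxE (gain_poisson r_eq).
have partialE T : bias_partial M pi s T = (h - P ^+ T *m h) s ord0.
  rewrite /bias_partial gain_col -telescope_mulmx summxE; apply: eq_bigr => t _.
  have -> : h - P *m h = r - const_mx c by rewrite r_eq addrAC subrr add0r.
  by rewrite !expect_tE mulmxBr !mxE.
rewrite /bias; apply: cvg_lim => //.
have wB := col_bounded_sum_norm w; set B := \sum_i _ in wB.
apply: (cvg_of_dist_le (cvg_mul_invn (B + B))) => N N0.
under eq_bigr do rewrite partialE.
rewrite -summxE.
have -> : \sum_(T < N) (h - P ^+ T.+1 *m h) = h *+ N - P *m (w - P ^+ N *m w).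
  rewrite sumrB sumr_const card_ord -telescope_mulmx mulmx_sumr.
  by congr (_ - _); apply: eq_bigr => T _; rewrite exprS -mulmxE -mulmxA -h_eq.
rewrite !mxE mulmxnE; apply: cesaro_dist_le => //; rewrite normrN.
have := row_stochastic_mul_bounded sP
  (col_boundedB wB (row_stochastic_mul_bounded (row_stochasticX N sP) wB)) s.
by rewrite mxE.
Qed.

Lemma disc_value_fixpoint g V : 0 <= g < 1 -> r = V - g *: (P *m V) ->
  forall s, disc_value M g pi s = V s ord0.
Proof.
move=> /andP[g0 g1] r_eq s; apply: cvg_lim => //.
have VB := col_bounded_sum_norm V; set B := \sum_i _ in VB.
apply: (cvg_of_dist_le (cvg_geometric B (_ : `|g| < 1))) => [|N _].
  by rewrite ger0_norm.
have -> : r = V - g *: (P *m V) - 0 by rewrite subr0.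
rewrite sum_discounted_expect_t sum_discounted big1 ?subr0 => [|t _]; last first.
  by rewrite mulmx0 scaler0.
rewrite !mxE addrAC subrr add0r normrN normrM ger0_norm ?exprn_ge0 // mulrC.
rewrite ler_wpM2r ?exprn_ge0 //.
by have := row_stochastic_mul_bounded (row_stochasticX N sP) VB s; rewrite mxE.
Qed.

Lemma disc_value_le_fixpoint g V d : 0 <= g < 1 -> r = V - g *: (P *m V) - d ->
  col_ge0 d -> col_ge0 r -> forall s, disc_value M g pi s <= V s ord0 - d s ord0.
Proof.
move=> /andP[g0 g1] r_eq d0 r0 s.
have VB := col_bounded_sum_norm V; set B := \sum_i _ in VB.
have B0 : 0 <= B by rewrite sumr_ge0.
pose D N := (\sum_(t < N) g ^+ t *: (P ^+ t *m d)) s ord0.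
pose W N := (g ^+ N *: (P ^+ N *m V)) s ord0.
have uE N : \sum_(t < N) g ^+ t * expect_t M pi t r s = V s ord0 - W N - D N.
  by rewrite sum_discounted_expect_t r_eq sum_discounted /W /D !mxE.
have gN_ge0 N : 0 <= g ^+ N by rewrite exprn_ge0.
have WB N : `|W N| <= g ^+ N * B.
  rewrite /W mxE normrM ger0_norm // ler_wpM2l //.
  by have := row_stochastic_mul_bounded (row_stochasticX N sP) VB s; rewrite mxE.
have term_ge0 t : 0 <= (g ^+ t *: (P ^+ t *m d)) s ord0.
  by rewrite mxE mulr_ge0 //; exact: row_stochastic_mul_ge0 (row_stochasticX t sP) d0 s.
have D_ge0 N : 0 <= D N by rewrite /D summxE sumr_ge0.
have D_ge_d N : (0 < N)%N -> d s ord0 <= D N.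
  case: N => // N _; rewrite /D summxE big_ord_recl /= !expr0 mul1mx scale1r lerDl.
  exact: sumr_ge0.
have cu : cvgn (fun N => \sum_(t < N) g ^+ t * expect_t M pi t r s).
  apply: nondecreasing_is_cvgn.
    apply/nondecreasing_seqP => N; rewrite big_ord_recr /= lerDl expect_tE mulr_ge0 //.
    exact: row_stochastic_mul_ge0 (row_stochasticX N sP) r0 s.
  exists (V s ord0 + B) => _ [N _ <-]; rewrite uE.
  have gN_le1 : g ^+ N <= 1 by rewrite exprn_ile1 // ltW.
  have := WB N; rewrite ler_norml => /andP[+ _].
  have := D_ge0 N; have : g ^+ N * B <= B by rewrite ler_piMl.
  lra.
apply: (limn_le_of cu (cvg_geometric B (_ : `|g| < 1))) => [|N N0]; first by rewrite ger0_norm.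
rewrite uE /=; have := WB N; rewrite ler_norml => /andP[+ _].
have := D_ge_d N N0; rewrite [B * _]mulrC; lra.
Qed.
End PolicyEvaluation.

Section Bellman.
Variables (R : realType) (n : nat) (M : mdp R n.+1).
Implicit Types (pi : policy M) (c g : R) (h V : 'cV[R]_n.+1).

Definition trans_stochastic :=
  forall s a, (forall j, 0 <= @trans _ _ M s a j) /\ \sum_j @trans _ _ M s a j = 1.

Definition qvalue g V s (a : 'I_(nact M s)) :=
  @rew _ _ M s a + g * \sum_j @trans _ _ M s a j * V j ord0.
Arguments qvalue g V s a : clear implicits.

Lemma rpi_Ppi_qvalue pi g V s :
  rpi M pi s ord0 + g * (Ppi M pi *m V) s ord0 = \sum_a pi s a * qvalue g V s a.
Proof.
rewrite /rpi /Ppi !mxE; under [RHS]eq_bigr do rewrite mulrDr.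
rewrite big_split /=; congr (_ + _).
under eq_bigr do rewrite mxE mulr_suml.
rewrite exchange_big mulr_sumr; apply: eq_bigr => a _.
rewrite mulrCA; congr (_ * _); rewrite mulr_sumr; apply: eq_bigr => j _.
by rewrite mulrA.
Qed.

Lemma row_stochastic_Ppi pi : trans_stochastic -> is_policy M pi -> row_stochastic (Ppi M pi).
Proof.
move=> sT sp; split=> [i j | i].
  by rewrite mxE; apply: sumr_ge0 => a _; rewrite mulr_ge0 ?(proj1 (sp i)) ?(proj1 (sT i a)).
under eq_bigr do rewrite mxE.
rewrite exchange_big /= -(proj2 (sp i)); apply: eq_bigr => a _.
by rewrite -mulr_sumr (proj2 (sT i a)) mulr1.
Qed.

Lemma rpi_ge0 pi : is_policy M pi -> (forall s a, 0 <= @rew _ _ M s a) -> col_ge0 (rpi M pi).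
Proof.
by move=> sp r0 i; rewrite mxE; apply: sumr_ge0 => a _; rewrite mulr_ge0 ?(proj1 (sp i)).
Qed.

Lemma policy_mean_gap pi s (f : 'I_(nact M s) -> R) K a0 : is_policy M pi ->
  (forall a, f a <= K) -> pi s a0 * (K - f a0) <= K - \sum_a pi s a * f a.
Proof.
move=> /(_ s) [pi0 pi1] fK.
have -> : K - \sum_a pi s a * f a = \sum_a pi s a * (K - f a).
  by under [RHS]eq_bigr do rewrite mulrBr; rewrite sumrB -mulr_suml pi1 mul1r.
rewrite (bigD1 a0) //= lerDl; apply: sumr_ge0 => a _.
by rewrite mulr_ge0 ?subr_ge0.
Qed.

Lemma policy_mean_le pi s (f : 'I_(nact M s) -> R) K : is_policy M pi ->
  (forall a, f a <= K) -> \sum_a pi s a * f a <= K.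
Proof.
move=> /(_ s) [pi0 pi1] fK; rewrite -[K]mul1r -pi1 mulr_suml.
by apply: ler_sum => a _; rewrite ler_wpM2l.
Qed.

Lemma gain_le_qvalue pi c h : trans_stochastic -> is_policy M pi -> 0 <= c ->
  (forall s a, qvalue 1 h s a <= c + h s ord0) -> forall s, gain M pi s <= c.
Proof.
move=> sT sp c0 qh.
pose d := const_mx c + (h - Ppi M pi *m h) - rpi M pi.
apply: (gain_le_poisson (row_stochastic_Ppi sT sp) (h := h) (d := d)) => //.
  by rewrite /d opprB addrC subrK.
move=> s; have -> : d s ord0 = c + h s ord0 - \sum_a pi s a * qvalue 1 h s a.
  by rewrite /d -rpi_Ppi_qvalue !mxE; ring.
by rewrite subr_ge0; exact: policy_mean_le.
Qed.

Lemma disc_value_le_qvalue pi g V : trans_stochastic -> is_policy M pi ->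
  (forall s a, 0 <= @rew _ _ M s a) -> 0 <= g < 1 ->
  (forall s a, qvalue g V s a <= V s ord0) ->
  forall s, disc_value M g pi s <= \sum_a pi s a * qvalue g V s a.
Proof.
move=> sT sp r0 g01 qV s.
pose d := V - g *: (Ppi M pi *m V) - rpi M pi.
have dE i : d i ord0 = V i ord0 - \sum_a pi i a * qvalue g V i a.
  by rewrite /d -rpi_Ppi_qvalue !mxE; ring.
have r_eq : rpi M pi = V - g *: (Ppi M pi *m V) - d by rewrite /d opprB addrC subrK.
have d0 : col_ge0 d by move=> i; rewrite dE subr_ge0; exact: policy_mean_le.
have := disc_value_le_fixpoint (row_stochastic_Ppi sT sp) g01 r_eq d0 (rpi_ge0 sp r0) s.
by rewrite dE opprB addrCA subrr addr0.
Qed.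

Lemma policy_eq_of_support pi sigma : is_policy M pi -> is_policy M sigma ->
  (forall s a, sigma s a = 0 \/ sigma s a = 1) ->
  (forall s a, sigma s a = 0 -> pi s a = 0) -> pi = sigma.
Proof.
move=> sp ssigma sigma01 supp; apply: functional_extensionality_dep => s.
apply: funext => a; have [sa0|sigma1] := sigma01 s a; first by rewrite sa0 supp.
have [sigma0 sigma_sum] := ssigma s; have [_ pi_sum] := sp s.
have others : \sum_(b | b != a) sigma s b = 0.
  by move: sigma_sum; rewrite (bigD1 a) //= sigma1 => /(canRL (addKr 1)) ->; exact: addNr.
rewrite sigma1 -pi_sum (bigD1 a) //= big1 ?addr0 // => b ba.
by apply: supp; exact: (psumr_eq0P (fun b _ => sigma0 b) others).
Qed.

End Bellman.
Arguments qvalue {R n} M g V s a.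

Lemma sp_norm_eq (R : realType) n (x : 'I_n.+1 -> R) i j :
  (forall k, x j <= x k <= x i) -> sp_norm x = x i - x j.
Proof.
move=> x_ij; congr (_ - _); apply/le_anti/andP; split.
- apply: bigmax_le => [|k _]; first by have /andP[] := x_ij ord0.
  by have /andP[] := x_ij k.
- exact: le_bigmax.
- exact: bigmin_le.
- apply: le_bigmin => [|k _]; first by have /andP[] := x_ij ord0.
  by have /andP[] := x_ij k.
Qed.

Definition natcol (R : realType) n (f : nat -> R) : 'cV[R]_n := \col_i f (val i).

Lemma natcolE (R : realType) n (f : nat -> R) s : natcol n f s ord0 = f (val s).
Proof. by rewrite mxE. Qed.

Section Example.
Variables (R : realType) (T eps : R).
Hypotheses (hT : 1 <= T) (heps : 0 < eps).
Local Notation M := (ex_mdp T eps).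

Let T_gt0 : 0 < T. Proof. exact: lt_le_trans ltr01 hT. Qed.
Let T_neq0 : T != 0. Proof. by rewrite gt_eqF. Qed.
Let epsT_ge_eps : eps <= eps * T. Proof. by rewrite ler_peMr // ltW. Qed.

Lemma ex_trans_stochastic : trans_stochastic M.
Proof.
have q0 : 0 <= 1 / T by rewrite divr_ge0 // ltW.
have q1 : 1 / T <= 1 by rewrite ler_pdivrMr // mul1r.
case=> [[|[|[|[|s]]]] Hs] //= [[|[|a]] Ha] //=; split;
  rewrite ?big_ord_recl ?big_ord0 /=;
  try (case=> [[|[|[|[|j]]]] Hj] //=); rewrite ?subr_ge0 //; lra.
Qed.

Lemma ex_rew_ge0 s (a : 'I_(nact M s)) : 0 <= @rew _ _ M s a.
Proof. by case: s a => [[|[|[|[|s]]]] Hs] //= [[|[|a]] Ha] //=; move: heps; lra. Qed.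

(* [chain_policy] moves from state 1 to state 3 and stays in state 4;
   [cycle_policy] moves from states 1 and 4 to state 2. *)
Definition chain_policy : policy M := fun s a =>
  match val s, val a with 0, 1 | 3, 0 => 1 | 0, _ | 3, _ => 0 | _, _ => 1 end.
Definition cycle_policy : policy M := fun s a =>
  match val s, val a with 0, 0 | 3, 1 => 1 | 0, _ | 3, _ => 0 | _, _ => 1 end.
Arguments chain_policy : clear implicits.
Arguments cycle_policy : clear implicits.

Lemma chain_policy_ok : is_policy M chain_policy.
Proof.
case=> [[|[|[|[|s]]]] Hs] //=; split; rewrite ?big_ord_recl ?big_ord0 /chain_policy /=;
  try (case=> [[|[|a]] Ha] //=); lra.
Qed.

Lemma cycle_policy_ok : is_policy M cycle_policy.
Proof.
case=> [[|[|[|[|s]]]] Hs] //=; split; rewrite ?big_ord_recl ?big_ord0 /cycle_policy /=;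
  try (case=> [[|[|a]] Ha] //=); lra.
Qed.

Ltac expand_states :=
  apply/colP => -[[|[|[|[|?]]]] ?] //;
  unfold rpi, Ppi, natcol, chain_policy, cycle_policy;
  rewrite !mxE !big_ord_recl !big_ord0 !mxE ?big_ord_recl ?big_ord0 /=.

Definition chain_gain : R := 1/2 + eps/2.
Definition chain_bias (k : nat) : R :=
  match k with
  | 0 => - (1/2) - eps/2 - eps*T/4 | 1 => - (1/2) - eps - eps*T/4
  | 2 => - (eps*T/4) | _ => eps*T/4 end.
Definition chain_bias_potential (k : nat) : R :=
  match k with
  | 0 => chain_bias 0 - eps*T*T/4 | 1 => chain_bias 0 + chain_bias 1 - eps*T*T/4
  | 2 => - (eps*T*T/4) | _ => 0 end.
Definition cycle_bias (k : nat) : R := match k with 0 | 1 => 0 | _ => - (1/2) end.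
Definition cycle_bias_potential (k : nat) : R :=
  match k with 0 | 1 => 0 | 2 => - (1/2) - T/2 | _ => - (1/2) end.

Lemma chain_poisson : rpi M chain_policy =
  const_mx chain_gain + (natcol 4 chain_bias - Ppi M chain_policy *m natcol 4 chain_bias).
Proof. by expand_states; rewrite /chain_gain; field. Qed.

Lemma chain_bias_centered : natcol 4 chain_bias =
  natcol 4 chain_bias_potential - Ppi M chain_policy *m natcol 4 chain_bias_potential.
Proof. by expand_states; field. Qed.

Lemma cycle_poisson : rpi M cycle_policy =
  const_mx (1/2) + (natcol 4 cycle_bias - Ppi M cycle_policy *m natcol 4 cycle_bias).
Proof. by expand_states; field. Qed.

Lemma cycle_bias_centered : natcol 4 cycle_bias =
  natcol 4 cycle_bias_potential - Ppi M cycle_policy *m natcol 4 cycle_bias_potential.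
Proof. by expand_states; field. Qed.

Lemma chain_stochastic : row_stochastic (Ppi M chain_policy).
Proof. exact: row_stochastic_Ppi ex_trans_stochastic chain_policy_ok. Qed.

Lemma cycle_stochastic : row_stochastic (Ppi M cycle_policy).
Proof. exact: row_stochastic_Ppi ex_trans_stochastic cycle_policy_ok. Qed.

Lemma gain_chain s : gain M chain_policy s = chain_gain.
Proof. exact: (gain_poisson chain_stochastic chain_poisson). Qed.

Lemma bias_chain s : bias M chain_policy s = chain_bias (val s).
Proof. by rewrite (bias_poisson chain_stochastic chain_poisson chain_bias_centered) natcolE. Qed.

Lemma gain_cycle s : gain M cycle_policy s = 1/2.
Proof. exact: (gain_poisson cycle_stochastic cycle_poisson). Qed.

Lemma bias_cycle s : bias M cycle_policy s = cycle_bias (val s).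
Proof. by rewrite (bias_poisson cycle_stochastic cycle_poisson cycle_bias_centered) natcolE. Qed.

Lemma qvalue_chain_bias_le s a :
  qvalue M 1 (natcol 4 chain_bias) s a <= chain_gain + chain_bias (val s).
Proof.
rewrite /qvalue /natcol; under eq_bigr do rewrite mxE.
have e0 := heps; have epsT_ge0 : 0 <= eps * T by rewrite mulr_ge0 // ltW.
case: s a => [[|[|[|[|s]]]] Hs] //= [[|[|a]] Ha] //=;
  rewrite !big_ord_recl !big_ord0 /= /chain_gain; try lra.
all: by rewrite le_eqVlt; apply/orP; left; apply/eqP; field.
Qed.

Lemma opt_gain_ex s : opt_gain M s = chain_gain.
Proof.
have gain_le pi : is_policy M pi -> gain M pi s <= chain_gain.
  move=> sp; apply: (gain_le_qvalue (h := natcol 4 chain_bias) ex_trans_stochastic sp _ _ s).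
    by rewrite /chain_gain; move: heps; lra.
  by move=> s' a; rewrite natcolE; exact: qvalue_chain_bias_le.
rewrite /opt_gain; set E := [set x | _].
have E_chain : E chain_gain.
  by exists chain_policy; split; [exact: chain_policy_ok | rewrite gain_chain].
have E_ub : ubound E chain_gain by move=> _ [pi [sp ->]]; exact: gain_le.
apply/le_anti/andP; split; first by apply: ge_sup => //; exists chain_gain.
exact: ub_le_sup (ex_intro _ chain_gain E_ub) _ E_chain.
Qed.

Lemma sp_norm_bias_chain : sp_norm (bias M chain_policy) = eps * T / 2 + eps + 1 / 2.
Proof.
have e0 := heps; have epsT_ge0 : 0 <= eps * T by rewrite mulr_ge0 // ltW.
rewrite (@sp_norm_eq _ _ _ (Ordinal (isT : (3 < 4)%N)) (Ordinal (isT : (1 < 4)%N))).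
  by rewrite !bias_chain /=; lra.
by case=> [[|[|[|[|k]]]] Hk] //; rewrite !bias_chain /=; lra.
Qed.

Lemma sp_norm_bias_cycle : sp_norm (bias M cycle_policy) = 1 / 2.
Proof.
rewrite (@sp_norm_eq _ _ _ (Ordinal (isT : (0 < 4)%N)) (Ordinal (isT : (2 < 4)%N))).
  by rewrite !bias_cycle /=; lra.
by case=> [[|[|[|[|k]]]] Hk] //; rewrite !bias_cycle /=; lra.
Qed.

Definition bw_threshold : R := 1 - eps / (4 * (2 + eps * T)).

(* Under [chain_policy] states 3 and 4 form a closed chain: the sum [S] and the
   difference [D] of their discounted values solve [(1 - g) S = 1 + eps] and
   [D = eps + g (1 - 2/T) D]; states 1 and 2 then follow by one step each. *)
Definition pair_sum (g : R) : R := (1 + eps) / (1 - g).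
Definition pair_diff (g : R) : R := eps / (1 - g * (1 - 2 * (1 / T))).
Definition chain_value (g : R) (k : nat) : R :=
  match k with
  | 0 => g * ((pair_sum g - pair_diff g) / 2)
  | 1 => 1/2 + g * (g * ((pair_sum g - pair_diff g) / 2))
  | 2 => (pair_sum g - pair_diff g) / 2
  | _ => (pair_sum g + pair_diff g) / 2 end.

Lemma bw_threshold_ge0 : 0 <= bw_threshold.
Proof.
have e0 := heps; have epsT := epsT_ge_eps.
rewrite subr_ge0 ler_pdivrMr ?mulr_gt0 //; lra.
Qed.

Lemma bw_threshold_lt1 : bw_threshold < 1.
Proof.
have e0 := heps; have epsT := epsT_ge_eps.
by rewrite ltrBlDl ltrDr divr_gt0 // mulr_gt0 //; lra.
Qed.

Lemma above_bw_threshold g : bw_threshold < g < 1 ->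
  1/2 < g /\ (1 - g) * (2 + eps * T) < eps / 2.
Proof.
move=> /andP[g_gt g_lt1]; have e0 := heps; have epsT := epsT_ge_eps.
rewrite /bw_threshold in g_gt; set K := 2 + eps * T in g_gt *.
have K_gt0 : 0 < K by rewrite /K; lra.
set z := eps / (4 * K) in g_gt.
have z_gt0 : 0 < z by rewrite divr_gt0 // mulr_gt0.
have zK : z * (4 * K) = eps by rewrite divfK // gt_eqF // mulr_gt0.
have z_lt : z < 1/4 by rewrite ltr_pdivrMr ?mulr_gt0 //; rewrite /K; lra.
have : 0 < (z - (1 - g)) * K by rewrite mulr_gt0 //; lra.
split; nra.
Qed.

Lemma pair_sum_diffE g : 0 < g < 1 ->
  (1 - g) * pair_sum g = 1 + eps /\ (1 - g * (1 - 2 * (1 / T))) * pair_diff g = eps.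
Proof.
move=> /andP[g_gt0 g_lt1]; have q_gt0 : 0 < 1 / T by rewrite divr_gt0.
have den_gt0 : 0 < 1 - g * (1 - 2 * (1 / T)) by nra.
by split; rewrite mulrC divfK // gt_eqF //; lra.
Qed.

Section Discounted.
Variable g : R.
Hypothesis g_in : bw_threshold < g < 1.
Local Notation V := (natcol 4 (chain_value g)).

Let g01 : 0 <= g < 1.
Proof.
have [g_gt _] := above_bw_threshold g_in; have /andP[_ ->] := g_in.
by rewrite andbT; move: g_gt; lra.
Qed.

Let pair_eqs : (1 - g) * pair_sum g = 1 + eps /\
  (1 - g * (1 - 2 * (1 / T))) * pair_diff g = eps.
Proof.
have [g_gt _] := above_bw_threshold g_in; have /andP[_ g_lt1] := g_in.
by apply: pair_sum_diffE; rewrite g_lt1 andbT; move: g_gt; lra.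
Qed.

Lemma chain_value_margins :
  1/2 + g * chain_value g 1 < chain_value g 0 /\ g * chain_value g 1 < chain_value g 3.
Proof.
have [g_gt g_close] := above_bw_threshold g_in; have /andP[_ g_lt1] := g_in.
have [sumE diffE] := pair_eqs; have e0 := heps.
rewrite /=; set S := pair_sum g in sumE *; set D := pair_diff g in diffE *.
set q := 1 / T in diffE.
have qT : q * T = 1 by rewrite /q mul1r mulVf.
have q_gt0 : 0 < q by rewrite /q divr_gt0.
have den_gt0 : 0 < 1 - g * (1 - 2 * q) by nra.
have D_gt0 : 0 < D by nra.
have gD : 2 * g * D <= eps * T.
  have -> : 2 * g * D = 2 * g * q * D * T by rewrite -[LHS]mulr1 -qT; ring.
  by rewrite ler_wpM2r ?ltW //; nra.
set X := (1 - g) * (S - D).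
have gX_gt1 : 1 < g * X.
  have : (1 - g) * (2 * g * D) <= (1 - g) * (eps * T) by rewrite ler_wpM2l // subr_ge0 ltW.
  have : g * X = g * (1 + eps) - (1 - g) * (g * D) by rewrite /X -sumE; ring.
  nra.
have X_gt1 : 1 < X by nra.
have : 0 < (1 + g) * (g * X - 1) by rewrite mulr_gt0 //; lra.
have : 0 <= (g + g * g) * X by rewrite mulr_ge0 //; nra.
have : (1 + g) * (g * X) = g * (S - D) - g * (g * (g * (S - D))) by rewrite /X; ring.
have : (1 - g * (g * g)) * (S - D) = X + (g + g * g) * X by rewrite /X; ring.
split; nra.
Qed.

Lemma chain_value_fixpoint :
  rpi M chain_policy = V - g *: (Ppi M chain_policy *m V).
Proof.
have [sumE diffE] := pair_eqs.
expand_states; set S := pair_sum g in sumE *; set D := pair_diff g in diffE *; nra.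
Qed.

Lemma qvalue_chain_value_le s a : qvalue M g V s a <= V s ord0.
Proof.
have [sumE diffE] := pair_eqs; have [/= m0 m3] := chain_value_margins.
rewrite /qvalue natcolE; under eq_bigr do rewrite natcolE.
case: s a => [[|[|[|[|s]]]] Hs] //= [[|[|a]] Ha] //=; rewrite !big_ord_recl !big_ord0 /=.
all: set S := pair_sum g in sumE m0 m3 *; set D := pair_diff g in diffE m0 m3 *; nra.
Qed.

Lemma qvalue_chain_value_lt s a : chain_policy s a = 0 -> qvalue M g V s a < V s ord0.
Proof.
have [sumE diffE] := pair_eqs; have [/= m0 m3] := chain_value_margins.
rewrite /qvalue natcolE; under eq_bigr do rewrite natcolE.
case: s a => [[|[|[|[|s]]]] Hs] //= [[|[|a]] Ha] //=; rewrite /chain_policy /=;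
  move=> /eqP; rewrite ?oner_eq0 // => _; rewrite !big_ord_recl !big_ord0 /=.
all: set S := pair_sum g in sumE m0 m3 *; set D := pair_diff g in diffE m0 m3 *; nra.
Qed.

Lemma disc_value_chain s : disc_value M g chain_policy s = V s ord0.
Proof. exact: (disc_value_fixpoint chain_stochastic g01 chain_value_fixpoint). Qed.

Lemma disc_value_le_qvalue_chain pi s : is_policy M pi ->
  disc_value M g pi s <= \sum_a pi s a * qvalue M g V s a.
Proof.
move=> sp; exact: (disc_value_le_qvalue ex_trans_stochastic sp ex_rew_ge0 g01
  qvalue_chain_value_le).
Qed.

End Discounted.

Lemma chain_policy_blackwell : blackwell_optimal M chain_policy.
Proof.
split; first exact: chain_policy_ok.
exists bw_threshold; split; first by rewrite bw_threshold_ge0 bw_threshold_lt1.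
move=> g g_in pi sp s; rewrite disc_value_chain //.
apply: le_trans (disc_value_le_qvalue_chain g_in s sp) _.
exact: policy_mean_le sp (qvalue_chain_value_le g_in (s := s)).
Qed.

Lemma chain_policy01 s a : chain_policy s a = 0 \/ chain_policy s a = 1.
Proof. case: s a => [[|[|[|[|s]]]] Hs] //= [[|[|a]] Ha] //=; by [left | right]. Qed.

Lemma blackwell_optimal_chain pi : blackwell_optimal M pi -> pi = chain_policy.
Proof.
case=> sp [g1 [/andP[_ g1_lt1] pi_opt]].
pose m := Num.max bw_threshold g1; pose g := (m + 1) / 2.
have m_lt1 : m < 1 by rewrite gt_max bw_threshold_lt1.
have [th_le_m g1_le_m] : bw_threshold <= m /\ g1 <= m by rewrite !le_max !lexx orbT.
have g_th : bw_threshold < g < 1 by apply/andP; split; rewrite /g; lra.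
have g_g1 : g1 < g < 1 by apply/andP; split; rewrite /g; lra.
apply: (policy_eq_of_support sp chain_policy_ok chain_policy01) => s a chain0.
have lt := qvalue_chain_value_lt g_th chain0.
have gap := policy_mean_gap a sp (qvalue_chain_value_le g_th (s := s)).
have := pi_opt g g_g1 _ chain_policy_ok s; rewrite disc_value_chain //.
have := disc_value_le_qvalue_chain g_th s sp.
have := proj1 (sp s) a; set q := qvalue _ _ _ _ _ in lt gap *.
by nra.
Qed.

End Example.

Arguments chain_policy {R T eps} s a.
Arguments cycle_policy {R T eps} s a.

Theorem theorem28 (R : realType) (T eps : R) (hT : 1 <= T) (heps : 0 < eps) :
  let M := ex_mdp T eps in
  (* ||h^*||_sp, h^* being the bias of a Blackwell-optimal policy *)
  (exists pi, blackwell_optimal M pi) /\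
  (forall pi, blackwell_optimal M pi ->
     sp_norm (bias M pi) = eps * T / 2 + eps + 1 / 2) /\
  (exists pi, is_policy M pi /\
     (exists c : R, forall s, gain M pi s = c) /\
     (forall s, gain M pi s = opt_gain M s - eps / 2) /\
     sp_norm (bias M pi) = 1 / 2).
Proof.
rewrite /=; split; first by exists chain_policy; exact: chain_policy_blackwell.
split.
  by move=> pi /(blackwell_optimal_chain hT heps) ->; exact: sp_norm_bias_chain.
exists cycle_policy; split; first exact: cycle_policy_ok.
split; first by exists (1/2); exact: gain_cycle.
split; last exact: sp_norm_bias_cycle.
by move=> s; rewrite gain_cycle // opt_gain_ex // /chain_gain; lra.
Qed.
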